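(* Let $\mathcal{D}$ be any basic action theory (including (P1), (P2) and $(\star)$) with a sensing action $\mathit{obs}(z)$ sensing the fluent $f$, with likelihood axiom $l(\mathit{obs}(z),s) = u \equiv u = \mathit{Err}(z,f(s))$ and precondition axiom $\mathit{Poss}(\mathit{obs}(z),s)\equiv \mathit{true}$, where $\mathit{Err}(u_1,u_2)$ is an expression with only two free (numeric) variables, and where $\mathit{obs}(z)$ does not change the value of any fluent. Let $u$ be the variable among $\vec x = (x_1,\ldots,x_m)$ corresponding to the values of $f$, and let $a,b$ be terms. Then $$\mathcal{D}\models \textit{Bel}(a \le f \le b, do(\mathit{obs}(z),S_0)) = \frac{\int_{\vec x}[P(\vec x, f = u \land a \le u \le b, S_0)\times \mathit{Err}(z,u)]}{\int_{\vec x}[P(\vec x, f = u, S_0)\times\mathit{Err}(z,u)]}.$$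
   Context: Situation calculus: a many-sorted language $\mathcal{L}$ with sorts action, situation, object; $do(a,s)$ is the successor of $s$ under action $a$, $do(\alpha,s)$ for a sequence $\alpha$ is iterated $do$; $S_0$ the actual initial situation; $\mathit{Init}(s) \doteq \neg\exists a,s'.\, s = do(a,s')$; $\iota$ ranges over initial situations. The fluents $f_1,\ldots,f_m$ (one of which is $f$) are all the fluents, take only a situation argument, and take values in $\mathbb{R}$; $i$ ranges over their indices. $\phi[s]$ restores situation argument $s$ in situation-suppressed $\phi$. $\langle z.\ \psi \to t\rangle = v$ abbreviates $[(\exists z\psi)\supset \forall z(\psi \supset v = t)] \land [(\neg\exists z\psi) \supset v = 0]$. Distinguished symbols: $\mathit{Poss}(a,s)$, $p(s',s)$ (density of $s'$ when in $s$), $l(a,s)$ (likelihood). A basic action theory consists of an initial theory containing (P1) $\forall \iota,s.\ p(s,\iota) \ge 0 \land (p(s,\iota) > 0 \supset \mathit{Init}(s))$ and $(\star)$ $[\forall \vec x\, \exists \iota \bigwedge_i f_i(\iota) = x_i] \land [\forall \iota,\iota'.\ \bigwedge_i f_i(\iota) = f_i(\iota') \supset \iota = \iota']$; precondition axioms; successor state axioms including (P2) $p(s',do(a,s)) = v \equiv \exists s''[s' = do(a,s'') \land \mathit{Poss}(a,s'') \land v = p(s'',s)\times l(a,s'')] \lor \neg\exists s''[s'=do(a,s'')\land \mathit{Poss}(a,s'')] \land v = 0$; likelihood axioms; foundational axioms. For a ground action sequence $\alpha$, $P(\vec x,\phi,do(\alpha,S_0)) \doteq \langle \iota.\ \bigwedge_i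 f_i(\iota) = x_i \land \phi[do(\alpha,\iota)] \to p(do(\alpha,\iota),do(\alpha,S_0))\rangle$ (with $\alpha$ empty giving $P(\vec x,\phi,S_0)$), and $\textit{Bel}(\phi,s) \doteq \frac{1}{\gamma}\int_{\vec x} P(\vec x,\phi,s)$ with $\gamma$ the numerator with $\phi$ replaced by $\mathit{true}$. $\int_{\vec x}$ is the logical abbreviation of the improper Riemann integral over $\mathbb{R}^m$, and entailment is over $\mathbb{R}$-interpretations (structures where arithmetic, $e$, $\pi$, exponentiation and logarithms have their usual meaning over the reals). *)

From Stdlib Require Import Reals Lra ClassicalEpsilon Arith List.
From Coquelicot Require Import Coquelicot.
Open Scope R_scope.

(** An [SCStruct] is an R-interpretation: sorts [Sit], [Act]; the object
    sort is interpreted by the reals (fluent values / numeric arguments). *)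

Record SCStruct := {
  Sit : Type;
  Act : Type;
  sdo : Act -> Sit -> Sit;
  S0 : Sit;
  nfl : nat;
  fl : nat -> Sit -> R;          (* fl i = f_i, meaningful for i < m *)
  pdens : Sit -> Sit -> R;
  lik : Act -> Sit -> R;
  Poss : Act -> Sit -> Prop
}.

Section Defs.
Variable M : SCStruct.

Definition Init (s : Sit M) : Prop := ~ exists a s', s = sdo M a s'.

Fixpoint doseq (al : list (Act M)) (s : Sit M) : Sit M :=
  match al with
  | nil => s
  | a :: al' => doseq al' (sdo M a s)
  end.

Definition Foundational : Prop :=
  (forall a1 a2 s1 s2, sdo M a1 s1 = sdo M a2 s2 -> a1 = a2 /\ s1 = s2) /\
  (forall Q : Sit M -> Prop,
      (forall i, Init i -> Q i) ->
      (forall a s, Q s -> Q (sdo M a s)) -> forall s, Q s) /\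
  Init (S0 M).

Definition AxP1 : Prop :=
  forall i s, Init i -> pdens M s i >= 0 /\ (pdens M s i > 0 -> Init s).

(** (star): every vector of fluent values is realized by exactly one
    initial situation. Vectors are [nat -> R], only coordinates < m used. *)
Definition AxStar : Prop :=
  (forall x : nat -> R, exists i, Init i /\ forall k, (k < nfl M)%nat -> fl M k i = x k) /\
  (forall i i', Init i -> Init i' ->
     (forall k, (k < nfl M)%nat -> fl M k i = fl M k i') -> i = i').

Definition AxP2 : Prop :=
  forall s' a s v,
    pdens M s' (sdo M a s) = v <->
    ((exists s'', s' = sdo M a s'' /\ Poss M a s'' /\ v = pdens M s'' s * lik M a s'')
     \/ ((~ exists s'', s' = sdo M a s'' /\ Poss M a s'') /\ v = 0)).

(** The guarded term  <z. psi -> t> : the value of t at a witness of psi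
    if one exists, 0 otherwise. *)
Definition gval (psi : Sit M -> Prop) (t : Sit M -> R) : R :=
  match excluded_middle_informative (exists s, psi s) with
  | left H => t (proj1_sig (constructive_indefinite_description _ H))
  | right _ => 0
  end.

(** P(x, phi, do(alpha,S0)); formulas phi are situation-suppressed, i.e.
    predicates to which a situation is restored. *)
Definition Pw (x : nat -> R) (phi : Sit M -> Prop) (alpha : list (Act M)) : R :=
  gval (fun i => Init i /\ (forall k, (k < nfl M)%nat -> fl M k i = x k)
                 /\ phi (doseq alpha i))
       (fun i => pdens M (doseq alpha i) (doseq alpha (S0 M))).

End Defs.

Definition ImpInt (h : R -> R) : R :=
  real (Lim (fun u => RInt h (- u) u) p_infty).

(** Iterated improper integral int_{x_k} ... int_{x_{k+n-1}} g(x),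
    with x_k outermost; the remaining coordinates are set to 0. *)
Fixpoint iint (n k : nat) (g : (nat -> R) -> R) : R :=
  match n with
  | O => g (fun _ => 0)
  | S n' => ImpInt (fun t =>
      iint n' (S k) (fun x => g (fun j => if Nat.eqb j k then t else x j)))
  end.

Definition intX (M : SCStruct) (g : (nat -> R) -> R) : R := iint (nfl M) 0 g.

Definition Bel (M : SCStruct) (phi : Sit M -> Prop) (alpha : list (Act M)) : R :=
  / intX M (fun x => Pw M x (fun _ => True) alpha) * intX M (fun x => Pw M x phi alpha).

From Stdlib Require Import Reals List FunctionalExtensionality PropExtensionality ClassicalEpsilon Classical.
From Coquelicot Require Import Coquelicot.
Open Scope R_scope.

(* By (star), a value vector x is realised by exactly one initial situation i,
   so P(x, phi, do(alpha,S0)) is the density of do(alpha,i) when phi holds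
   there and 0 otherwise.  By (P2), with obs(z) always possible, the density of
   do(obs z, i) is p(i,S0) * Err(z, f(i)); and since obs(z) changes no fluent,
   f(do(obs z, i)) = f(i) = x_u.  So the integrands of Bel after sensing are
   the prior integrands weighted by Err(z, x_u). *)

Lemma gval_some (M : SCStruct) (P : Sit M -> Prop) (t : Sit M -> R) (v : R) :
  (exists s, P s) -> (forall s, P s -> t s = v) -> gval M P t = v.
Proof.
  intros Hex Ht. unfold gval.
  destruct (excluded_middle_informative (exists s, P s)) as [H | H].
  - destruct (constructive_indefinite_description _ H) as [s Hs]. simpl. auto.
  - contradiction.
Qed.

Lemma gval_none (M : SCStruct) (P : Sit M -> Prop) (t : Sit M -> R) :
  ~ (exists s, P s) -> gval M P t = 0.
Proof.
  intros Hex. unfold gval.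
  destruct (excluded_middle_informative (exists s, P s)) as [H | H].
  - contradiction.
  - reflexivity.
Qed.

Lemma Pw_ext (M : SCStruct) (x : nat -> R) (phi psi : Sit M -> Prop)
  (alpha : list (Act M)) :
  (forall s, phi s <-> psi s) -> Pw M x phi alpha = Pw M x psi alpha.
Proof.
  intros Hphi. unfold Pw. f_equal.
  apply functional_extensionality. intro i. f_equal. f_equal.
  apply propositional_extensionality. apply Hphi.
Qed.

Section Densities.
Variable M : SCStruct.

Definition has_values (x : nat -> R) (i : Sit M) : Prop :=
  forall k, (k < nfl M)%nat -> fl M k i = x k.

Lemma pdens_do_possible (a : Act M) (i : Sit M) :
  AxP2 M -> Poss M a i ->
  pdens M (sdo M a i) (sdo M a (S0 M)) = pdens M i (S0 M) * lik M a i.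
Proof.
  intros HP2 Hposs. apply HP2. left. exists i. auto.
Qed.

Hypothesis Hstar : AxStar M.

Lemma Pw_holds (x : nat -> R) (i : Sit M) (phi : Sit M -> Prop)
  (alpha : list (Act M)) :
  Init M i -> has_values x i -> phi (doseq M alpha i) ->
  Pw M x phi alpha = pdens M (doseq M alpha i) (doseq M alpha (S0 M)).
Proof.
  intros Hi Hx Hphi. unfold Pw. apply gval_some.
  - exists i. auto.
  - intros s (Hs & Hsx & _).
    replace s with i; [reflexivity |].
    apply (proj2 Hstar); auto.
    intros k Hk. rewrite Hx, Hsx; auto.
Qed.

Lemma Pw_fails (x : nat -> R) (i : Sit M) (phi : Sit M -> Prop)
  (alpha : list (Act M)) :
  Init M i -> has_values x i -> ~ phi (doseq M alpha i) -> Pw M x phi alpha = 0.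
Proof.
  intros Hi Hx Hphi. unfold Pw. apply gval_none.
  intros (s & Hs & Hsx & Hphis).
  replace s with i in Hphis; [contradiction |].
  apply (proj2 Hstar); auto.
  intros k Hk. rewrite Hx, Hsx; auto.
Qed.

End Densities.

Section Sensing.
Variables (M : SCStruct) (obs : R -> Act M) (fk : nat) (Err : R -> R -> R) (z : R).
Hypothesis Hfk : (fk < nfl M)%nat.
Hypothesis Hstar : AxStar M.
Hypothesis HP2 : AxP2 M.
Hypothesis Hlik : forall z' s v, lik M (obs z') s = v <-> v = Err z' (fl M fk s).
Hypothesis Hposs : forall z' s, Poss M (obs z') s <-> True.
Hypothesis Hssa :
  forall z' k s, (k < nfl M)%nat -> fl M k (sdo M (obs z') s) = fl M k s.

Lemma Pw_obs (x : nat -> R) (Q : R -> Prop) :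
  Pw M x (fun s => Q (fl M fk s)) (obs z :: nil) =
  Pw M x (fun s => fl M fk s = x fk /\ Q (x fk)) nil * Err z (x fk).
Proof.
  destruct (proj1 Hstar x) as (i & Hi & Hx).
  assert (Hfi : fl M fk i = x fk) by auto.
  assert (Hfobs : fl M fk (sdo M (obs z) i) = x fk) by (rewrite Hssa; auto).
  destruct (classic (Q (x fk))) as [HQ | HQ].
  - rewrite (Pw_holds M Hstar x i) by (simpl; rewrite ?Hfobs; auto).
    rewrite (Pw_holds M Hstar x i) by (simpl; auto).
    simpl. rewrite pdens_do_possible by (auto; apply Hposs; exact I).
    rewrite <- Hfi. f_equal. apply Hlik. reflexivity.
  - rewrite (Pw_fails M Hstar x i) by (simpl; rewrite ?Hfobs; auto).
    rewrite (Pw_fails M Hstar x i) by (simpl; tauto).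
    ring.
Qed.

End Sensing.

Theorem mainTheorem13
  (M : SCStruct)
  (obs : R -> Act M)              (* the sensing action obs(z) *)
  (fk : nat)                      (* f = f_fk ; u = x_fk *)
  (Err : R -> R -> R)             (* the expression Err(u1,u2) *)
  (a b z : R)                     (* the terms a, b and the argument z *)
  (Hfk : (fk < nfl M)%nat)
  (Hfound : Foundational M)
  (Hobs_inj : forall z1 z2, obs z1 = obs z2 -> z1 = z2)
  (HP1 : AxP1 M) (Hstar : AxStar M) (HP2 : AxP2 M)
  (Hlik : forall z' s v, lik M (obs z') s = v <-> v = Err z' (fl M fk s))
  (Hposs : forall z' s, Poss M (obs z') s <-> True)
  (Hssa : forall z' k s, (k < nfl M)%nat -> fl M k (sdo M (obs z') s) = fl M k s) :
  Bel M (fun s => a <= fl M fk s <= b) (obs z :: nil) =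
    intX M (fun x => Pw M x (fun s => fl M fk s = x fk /\ a <= x fk <= b) nil * Err z (x fk))
    / intX M (fun x => Pw M x (fun s => fl M fk s = x fk) nil * Err z (x fk)).
Proof.
  pose proof (Pw_obs M obs fk Err z Hfk Hstar HP2 Hlik Hposs Hssa) as Hobs.
  assert (Hnum : (fun x => Pw M x (fun s => a <= fl M fk s <= b) (obs z :: nil)) =
    (fun x => Pw M x (fun s => fl M fk s = x fk /\ a <= x fk <= b) nil * Err z (x fk))).
  { apply functional_extensionality. intro x. apply (Hobs x (fun r => a <= r <= b)). }
  assert (Hden : (fun x => Pw M x (fun _ => True) (obs z :: nil)) =
    (fun x => Pw M x (fun s => fl M fk s = x fk) nil * Err z (x fk))).
  { apply functional_extensionality. intro x.
    rewrite (Hobs x (fun _ => True)).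
    f_equal. apply Pw_ext. tauto. }
  unfold Bel. rewrite Hnum, Hden.
  unfold Rdiv. apply Rmult_comm.
Qed.
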